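(* Identify $\mathbb{S}^2$ with $\mathbb{C}\cup\{\infty\}$ and $\mathbb{C}^2$ with $\mathbb{R}^4$, and define $f:\mathbb{S}^2\to\mathbb{C}^2$ by $$f(z)=\left(\bar z\,\frac{|z|^4-1}{|z|^6+1},\; z^2\,\frac{|z|^2+1}{|z|^6+1}\right).$$ Then $f(\mathbb{S}^2)$ is the Veronese surface, up to a conformal transformation of $\mathbb{R}^4$.
   Context: The Veronese surface in $\mathbb{R}^4$ is the image (under stereographic projection $\mathbb{S}^4\setminus\{pt\}\to\mathbb{R}^4$) of the Veronese embedding of $\mathbb{R}P^2$ into $\mathbb{S}^4\subset\mathbb{R}^5$, $[x,y,z]\mapsto\big(\sqrt3\, yz,\sqrt3\, xz,\sqrt3\, xy,\tfrac{\sqrt3}{2}(x^2-y^2),\tfrac12(x^2+y^2-2z^2)\big)$ for $x^2+y^2+z^2=1$; ''up to conformal transformation'' means the surfaces agree after applying some conformal (Möbius) transformation of $\mathbb{R}^4\cup\{\infty\}$. The map $f$ extends continuously to $z=\infty$. *)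

From HB Require Import structures.
From mathcomp Require Import all_boot all_order all_algebra.
From mathcomp Require Import reals.
Set Implicit Arguments. Unset Strict Implicit. Unset Printing Implicit Defensive.
Import Order.TTheory GRing.Theory Num.Theory.
Local Open Scope ring_scope.

Section Defs.
Variable R : realType.

Definition sqn n (v : 'rV[R]_n) : R := \sum_(i < n) v ord0 i ^+ 2.

(* the conformal compactification R^n ∪ {∞}; None stands for ∞ *)
Definition ext n := option 'rV[R]_n.

Definition mob_translate n (a : 'rV[R]_n) : ext n -> ext n :=
  fun p => if p is Some x then Some (x + a) else None.
Definition mob_linear n (Q : 'M[R]_n) : ext n -> ext n :=
  fun p => if p is Some x then Some (x *m Q) else None.
Definition mob_dilate n (c : R) : ext n -> ext n :=
  fun p => if p is Some x then Some (c *: x) else None.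
Definition mob_invert n : ext n -> ext n :=
  fun p => match p with
           | Some x => if x == 0 then None else Some ((sqn x)^-1 *: x)
           | None => Some 0
           end.

(* Möbius (= conformal, by Liouville for n >= 3) transformations of R^n ∪ {∞}:
   the group generated by translations, orthogonal maps, positive dilations
   and the inversion in the unit sphere. *)
Inductive mobius n : (ext n -> ext n) -> Prop :=
  | mobius_id : mobius (@id (ext n))
  | mobius_translate (a : 'rV[R]_n) : mobius (@mob_translate n a)
  | mobius_linear (Q : 'M[R]_n) : Q *m Q^T = 1%:M -> mobius (@mob_linear n Q)
  | mobius_dilate c : 0 < c -> mobius (@mob_dilate n c)
  | mobius_invert : mobius (@mob_invert n)
  | mobius_comp g h : mobius g -> mobius h -> mobius (g \o h).

Definition mkv4 (a b c d : R) : 'rV[R]_4 :=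
  \row_(i < 4) nth 0 [:: a; b; c; d] i.
Definition mkv5 (a b c d e : R) : 'rV[R]_5 :=
  \row_(i < 5) nth 0 [:: a; b; c; d; e] i.

(* Veronese embedding of RP^2 (given on the unit sphere S^2 of R^3) into S^4 ⊂ R^5 *)
Definition veronese (x y z : R) : 'rV[R]_5 :=
  mkv5 (Num.sqrt 3 * y * z) (Num.sqrt 3 * x * z) (Num.sqrt 3 * x * y)
       (Num.sqrt 3 / 2 * (x ^+ 2 - y ^+ 2)) (1 / 2 * (x ^+ 2 + y ^+ 2 - 2 * z ^+ 2)).

Definition stereo (p : 'rV[R]_5) : ext 4 :=
  if p ord0 (@Ordinal 5 4 isT) == 1 then None
  else Some (\row_(i < 4) (p ord0 (widen_ord (isT : (4 <= 5)%N) i)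
                          / (1 - p ord0 (@Ordinal 5 4 isT)))).

(* S^2 = C ∪ {∞}: Some (a,b) is z = a + i b, None is ∞.
   f(z) = (zbar (|z|^4-1)/(|z|^6+1), z^2 (|z|^2+1)/(|z|^6+1)) ∈ C^2 = R^4,
   with C^2 -> R^4 : (w1,w2) |-> (Re w1, Im w1, Re w2, Im w2),
   and f(∞) := 0, the value of its continuous extension. *)
Definition fC (a b : R) : 'rV[R]_4 :=
  let r2 := a ^+ 2 + b ^+ 2 in
  let c1 := (r2 ^+ 2 - 1) / (r2 ^+ 3 + 1) in
  let c2 := (r2 + 1) / (r2 ^+ 3 + 1) in
  mkv4 (a * c1) (- b * c1) ((a ^+ 2 - b ^+ 2) * c2) (2 * a * b * c2).

Definition f (z : option (R * R)) : ext 4 :=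
  if z is Some (a, b) then Some (fC a b) else Some 0.

End Defs.

(* Write s(a + ib) = (2a, 2b, a^2 + b^2 - 1) / (1 + a^2 + b^2) for the inverse
   stereographic projection C -> S^2. A direct computation shows that the
   stereographic projection of the Veronese image of s(z) is sqrt 3 * Q(f(z)),
   where Q is the isometry (w1, w2) |-> (i w1, i conj w2). The map s is onto
   S^2 minus the north pole; that pole is reached through z = ∞, since
   f(∞) = f(0) and the Veronese map, being even, identifies the south pole s(0)
   with the north pole. *)
From HB Require Import structures.
From mathcomp Require Import all_boot all_order all_algebra.
From mathcomp Require Import reals ring lra.
Import Order.TTheory GRing.Theory Num.Theory.
Local Open Scope ring_scope.

Section VeroneseStereo.
Variable R : realType.

Let i4 : 'I_5 := @Ordinal 5 4 isT.

Lemma stereoE (p : 'rV[R]_5) : p ord0 i4 != 1 ->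
  stereo p = Some (\row_(i < 4) (p ord0 (widen_ord (isT : (4 <= 5)%N) i) / (1 - p ord0 i4))).
Proof. by rewrite /stereo => /negbTE ->. Qed.

Lemma veronese_opp (x y z : R) : veronese (- x) (- y) (- z) = veronese x y z.
Proof. by rewrite /veronese; congr mkv5; ring. Qed.

Lemma veronese_last_neq1 (x y z : R) : x ^+ 2 + y ^+ 2 + z ^+ 2 = 1 ->
  veronese x y z ord0 i4 != 1.
Proof.
move=> sph; rewrite /veronese /mkv5 mxE /=.
by apply/eqP; have := sqr_ge0 z; lra.
Qed.

Definition istereo_x (a b : R) := 2 * a / (1 + (a ^+ 2 + b ^+ 2)).
Definition istereo_y (a b : R) := 2 * b / (1 + (a ^+ 2 + b ^+ 2)).
Definition istereo_z (a b : R) := (a ^+ 2 + b ^+ 2 - 1) / (1 + (a ^+ 2 + b ^+ 2)).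

Lemma istereo_denom_neq0 (a b : R) : 1 + (a ^+ 2 + b ^+ 2) != 0.
Proof. by apply/eqP; have := sqr_ge0 a; have := sqr_ge0 b; lra. Qed.

Lemma istereo_sphere (a b : R) :
  istereo_x a b ^+ 2 + istereo_y a b ^+ 2 + istereo_z a b ^+ 2 = 1.
Proof. by rewrite /istereo_x /istereo_y /istereo_z; field; rewrite istereo_denom_neq0. Qed.

Lemma istereo_stereo (x y z : R) : x ^+ 2 + y ^+ 2 + z ^+ 2 = 1 -> z != 1 ->
  let a := x / (1 - z) in let b := y / (1 - z) in
  [/\ istereo_x a b = x, istereo_y a b = y & istereo_z a b = z].
Proof.
move=> sph z1 a b; have d : 1 - z != 0 by rewrite subr_eq0 eq_sym.
have r2E : a ^+ 2 + b ^+ 2 = (1 + z) / (1 - z).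
  rewrite !expr_div_n; have -> : x ^+ 2 = 1 - z ^+ 2 - y ^+ 2 by lra.
  by field.
have d2 : 1 - z + (1 + z) != 0 by apply/eqP; lra.
by rewrite /istereo_x /istereo_y /istereo_z r2E /a /b; split; field; rewrite d d2.
Qed.

(* In complex coordinates, x *m frame_mx is (w1, w2) |-> (i w1, i conj w2). *)
Definition frame_mx : 'M[R]_4 := \matrix_(i < 4, j < 4)
  nth 0 (nth [::] [:: [:: 0; 1; 0; 0]; [:: -1; 0; 0; 0]; [:: 0; 0; 0; 1]; [:: 0; 0; 1; 0]] i) j.

Lemma frame_mx_orthogonal : frame_mx *m frame_mx^T = 1%:M.
Proof.
apply/matrixP => i j; rewrite !mxE !big_ord_recl big_ord0 !mxE /=.
by case: i => [[|[|[|[|//]]]] ?]; case: j => [[|[|[|[|//]]]] ?]; rewrite /= ?mxE /=; ring.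
Qed.

Definition veronese_conformal : ext R 4 -> ext R 4 :=
  mob_dilate (Num.sqrt 3) \o mob_linear frame_mx.

Lemma veronese_conformal_mobius : mobius veronese_conformal.
Proof.
apply: mobius_comp; first by apply: mobius_dilate; rewrite sqrtr_gt0.
exact/mobius_linear/frame_mx_orthogonal.
Qed.

Lemma veronese_conformal_f (a b : R) : veronese_conformal (f (Some (a, b))) =
  stereo (veronese (istereo_x a b) (istereo_y a b) (istereo_z a b)).
Proof.
rewrite stereoE ?veronese_last_neq1 ?istereo_sphere //=; congr Some; apply/rowP => i.
have r2_ge0 : 0 <= a ^+ 2 + b ^+ 2 by rewrite addr_ge0 ?sqr_ge0.
have d1 : (a ^+ 2 + b ^+ 2) ^+ 3 + 1 != 0.
  by apply/eqP; have := exprn_ge0 3 r2_ge0; lra.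
(* 1 minus the last Veronese coordinate, cleared of denominators *)
have d2 : 2 * (1 + (a ^+ 2 + b ^+ 2)) ^+ 2 -
      ((2 * a) ^+ 2 + (2 * b) ^+ 2 - 2 * (a ^+ 2 + b ^+ 2 - 1) ^+ 2) != 0.
  have -> : 2 * (1 + (a ^+ 2 + b ^+ 2)) ^+ 2 -
      ((2 * a) ^+ 2 + (2 * b) ^+ 2 - 2 * (a ^+ 2 + b ^+ 2 - 1) ^+ 2) =
      (2 * (a ^+ 2 + b ^+ 2) - 1) ^+ 2 + 3 by ring.
  by apply/eqP; have := sqr_ge0 (2 * (a ^+ 2 + b ^+ 2) - 1); lra.
rewrite /istereo_x /istereo_y /istereo_z /fC /mkv4 /veronese /mkv5.
rewrite !mxE !big_ord_recl big_ord0 !mxE /=.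
by case: i => [[|[|[|[|//]]]] ?]; rewrite /= ?mxE /=; field;
  rewrite ?istereo_denom_neq0 ?d1 ?d2.
Qed.

Lemma fC00 : fC 0 0 = 0 :> 'rV[R]_4.
Proof.
by apply/rowP => i; rewrite /fC /mkv4 !mxE; case: i => [[|[|[|[|//]]]] ?]; rewrite /=; ring.
Qed.

Lemma veronese_conformal_f_infty :
  veronese_conformal (f None) = stereo (veronese 0 0 (1 : R)).
Proof.
have -> : f None = f (Some (0, 0)) :> ext R 4 by rewrite /= fC00.
rewrite veronese_conformal_f -[veronese 0 0 1]veronese_opp oppr0.
by congr (stereo (veronese _ _ _)); rewrite /istereo_x /istereo_y /istereo_z; field.
Qed.

Lemma veronese_conformal_f_onto (x y z : R) : x ^+ 2 + y ^+ 2 + z ^+ 2 = 1 ->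
  exists w, stereo (veronese x y z) = veronese_conformal (f w).
Proof.
move=> sph; have [z1|z1] := eqVneq z 1.
  rewrite z1 in sph *; have := sqr_ge0 x; have := sqr_ge0 y => y2 x2.
  have -> : x = 0 by apply/eqP; rewrite -sqrf_eq0; apply/eqP; lra.
  have -> : y = 0 by apply/eqP; rewrite -sqrf_eq0; apply/eqP; lra.
  by exists None; rewrite veronese_conformal_f_infty.
exists (Some (x / (1 - z), y / (1 - z))); rewrite veronese_conformal_f.
by have [-> -> ->] := istereo_stereo x y z sph z1.
Qed.

End VeroneseStereo.

Theorem proposition1p3 (R : realType) :
  exists phi : ext R 4 -> ext R 4,
    mobius phi /\
    forall q : ext R 4,
      (exists z : option (R * R), q = phi (f z)) <->
      (exists x y z : R, x ^+ 2 + y ^+ 2 + z ^+ 2 = 1 /\ q = stereo (veronese x y z)).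
Proof.
exists (veronese_conformal R); split; first exact: veronese_conformal_mobius.
move=> q; split.
  move=> [[[a b]|] ->].
    exists (@istereo_x R a b), (@istereo_y R a b), (@istereo_z R a b).
    by rewrite istereo_sphere veronese_conformal_f.
  exists 0, 0, 1; rewrite veronese_conformal_f_infty; split => //.
  by rewrite expr0n /=; ring.
move=> [x [y [z [sph ->]]]].
by have [w ->] := veronese_conformal_f_onto R x y z sph; exists w.
Qed.
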